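(* Let $D$ be a division algebra and let $\sigma_1,\ldots,\sigma_n$ be pairwise commuting automorphisms of $D$ such that $F=\mathcal{Z}(D)\cap\bigl(\bigcap_{i=1}^n D_{\sigma_i}\bigr)$ is infinite. If $\sigma_1^{d_1}=\cdots=\sigma_n^{d_n}$ for some positive integers $d_1,\ldots,d_n$, then the tuple $(\sigma_1,\ldots,\sigma_n)$ is automorphically normalizable over $D$. In particular, if $\sigma_1,\ldots,\sigma_n$ are of finite orders, then the tuple $(\sigma_1,\ldots,\sigma_n)$ is centrally normalizable over $D$.
   Context: All rings are associative with unity. $\mathcal{Z}(D)$ is the center of $D$ and $D_{\sigma}=\{r\in D:\sigma(r)=r\}$. For commuting automorphisms $\sigma_1,\ldots,\sigma_n$ of $D$, $D[t_1,\ldots,t_n;\sigma_1,\ldots,\sigma_n]$ denotes the skew polynomial ring in pairwise commuting variables with $t_ia=\sigma_i(a)t_i$ for $a\in D$. For a ring $S\supseteq D$, $a\in S$ is automorphic over $D$ with respect to $\tau\in\mathrm{Aut}(D)$ if $ab=\tau(b)a$ for all $b\in D$. $S$ is finite over a subring $R$ if finitely generated as a left $R$-module. Commuting $a_1,\ldots,a_m\in S$ are (left) algebraically independent over $D$ if the monomials in them are left linearly independent over $D$. $S$ is automorphically normalizable over $D$ if there exist $m\ge0$ and commuting $a_1,\ldots,a_m\in S$, automorphic over $D$ with respect to pairwise commuting automorphisms $\tau_1,\ldots,\tau_m$, left algebraically independent over $D$, with $S$ finite over the subring $D[a_1,\ldots,a_m]$ generated by $D\cup\{a_1,\ldots,a_m\}$;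 it is centrally normalizable if moreover the $\tau_i$ can be taken to be $\mathrm{id}_D$. A tuple $(\sigma_1,\ldots,\sigma_n)$ is automorphically (resp. centrally) normalizable over $D$ if every quotient of $D[t_1,\ldots,t_n;\sigma_1,\ldots,\sigma_n]$ by a proper two-sided ideal is automorphically (resp. centrally) normalizable over $D$. *)

(* with multinomials' mpoly used as the additive carrier of
   skew polynomial rings D[t_1,...,t_n; sigma_1,...,sigma_n]. *)
From HB Require Import structures.
From mathcomp Require Import all_boot all_order all_algebra.
From mathcomp Require Import mpoly.
Set Implicit Arguments. Unset Strict Implicit. Unset Printing Implicit Defensive.
Import Order.TTheory GRing.Theory.
Local Open Scope ring_scope.

Definition is_division_ring (D : unitRingType) : Prop :=
  forall x : D, x != 0 -> x \is a GRing.unit.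

Definition is_ring_aut (D : unitRingType) (s : {rmorphism D -> D}) : Prop :=
  bijective s.

Definition pairwise_commuting (D : Type) (k : nat) (s : 'I_k -> D -> D) : Prop :=
  forall i j x, s i (s j x) = s j (s i x).

Definition sigma_mon (D : Type) (n : nat) (s : 'I_n -> D -> D)
    (al : 'X_{1..n}) : D -> D :=
  foldr (fun i f => (iter (al i) (s i)) \o f) id (enum 'I_n).

(* Multiplication of D[t_1..t_n; s_1..s_n] on the underlying left D-module of
   polynomials {mpoly D[n]}: (a t^al)(b t^be) = a s^al(b) t^(al+be). *)
Definition skew_mul (D : unitRingType) (n : nat) (s : 'I_n -> D -> D)
    (p q : {mpoly D[n]}) : {mpoly D[n]} :=
  \sum_(al <- msupp p) \sum_(be <- msupp q)
     (p@_al * sigma_mon s al (q@_be)) *: 'X_[(al + be)%MM].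

Definition proper_twosided_ideal (D : unitRingType) (n : nat)
    (s : 'I_n -> D -> D) (I : {mpoly D[n]} -> Prop) : Prop :=
  [/\ I 0,
      forall x y, I x -> I y -> I (x - y),
      forall r x, I x -> I (skew_mul s r x),
      forall r x, I x -> I (skew_mul s x r)
    & ~ I 1].

(* The quotient S = D[t; s] / I is handled through representatives:
   elements of S are classes of elements of D[t;s], x = y in S iff I (x - y),
   and D sits in S as the classes of constant polynomials c%:MP. *)

Definition skew_monomial (D : unitRingType) (n m : nat) (s : 'I_n -> D -> D)
    (a : 'I_m -> {mpoly D[n]}) (be : 'X_{1..m}) : {mpoly D[n]} :=
  foldr (fun i r => skew_mul s (iter (be i) (skew_mul s (a i)) 1) r) 1 (enum 'I_m).

(* subring of D[t;s] generated by D (constants) and a_1..a_m; its image in S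
   is the subring of S generated by D and the classes of the a_i. *)
Inductive gen_subring (D : unitRingType) (n m : nat) (s : 'I_n -> D -> D)
    (a : 'I_m -> {mpoly D[n]}) : {mpoly D[n]} -> Prop :=
  | gen_const (c : D) : gen_subring s a c%:MP
  | gen_var (i : 'I_m) : gen_subring s a (a i)
  | gen_add x y : gen_subring s a x -> gen_subring s a y -> gen_subring s a (x + y)
  | gen_opp x : gen_subring s a x -> gen_subring s a (- x)
  | gen_mul x y : gen_subring s a x -> gen_subring s a y ->
                  gen_subring s a (skew_mul s x y).

Definition normalizable_quot (central : bool) (D : unitRingType) (n : nat)
    (s : 'I_n -> D -> D) (I : {mpoly D[n]} -> Prop) : Prop :=
  exists (m : nat) (a : 'I_m -> {mpoly D[n]}) (tau : 'I_m -> {rmorphism D -> D}),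
    [/\
        (forall i, is_ring_aut (tau i)) /\
        pairwise_commuting (fun i => (tau i : D -> D)),
        (central -> forall i x, tau i x = x),
        (forall i j, I (skew_mul s (a i) (a j) - skew_mul s (a j) (a i))) /\
        (forall i (b : D), I (skew_mul s (a i) b%:MP - skew_mul s (tau i b)%:MP (a i))),
        (* left algebraic independence over D: the monomials a^be are left
           linearly independent over D in S *)
        (forall P : {mpoly D[m]},
            I (\sum_(be <- msupp P) skew_mul s (P@_be)%:MP (skew_monomial s a be)) ->
            P = 0)
      & (* S finitely generated as a left module over the subring D[a_1..a_m] *)
        exists (k : nat) (r : 'I_k -> {mpoly D[n]}),
          forall x : {mpoly D[n]}, exists t : 'I_k -> {mpoly D[n]},
            (forall j, gen_subring s a (t j)) /\
            I (x - \sum_(j < k) skew_mul s (t j) (r j))].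

Definition automorphically_normalizable_quot := normalizable_quot false.
Definition centrally_normalizable_quot := normalizable_quot true.

Definition tuple_aut_normalizable (D : unitRingType) (n : nat)
    (s : 'I_n -> D -> D) : Prop :=
  forall I, proper_twosided_ideal s I -> automorphically_normalizable_quot s I.

Definition tuple_central_normalizable (D : unitRingType) (n : nat)
    (s : 'I_n -> D -> D) : Prop :=
  forall I, proper_twosided_ideal s I -> centrally_normalizable_quot s I.

Definition fixed_center (D : unitRingType) (n : nat) (s : 'I_n -> D -> D)
    (x : D) : Prop :=
  (forall y : D, x * y = y * x) /\ (forall i, s i x = x).

Definition infinite_pred (T : eqType) (P : T -> Prop) : Prop :=
  ~ exists l : seq T, forall x, P x -> x \in l.

From HB Require Import structures.
From mathcomp Require Import all_boot all_order all_algebra.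
From mathcomp Require Import mpoly.
From Stdlib Require Import Classical.
Set Implicit Arguments. Unset Strict Implicit. Unset Printing Implicit Defensive.
Import Order.TTheory GRing.Theory.
Local Open Scope ring_scope.

(* Put x_i = t_i^(d_i).  In S = D[t; sigma]/I the x_i commute, satisfy
   x_i b = tau(b) x_i for the common power tau = sigma_i^(d_i), and S is spanned
   over D[x] by the finitely many monomials t^r with r_i < d_i.  It remains to
   run Noether normalization on commuting tau-automorphic elements z_1..z_m.
   If they satisfy a nontrivial left relation P over D, of total degree N, set
   w_j = z_j - mu^(e^j) z_m (j < m) with e > all exponents of P and mu in
   F = Z(D) cap D_sigma; since mu is central and fixed, the w_j are again
   commuting and tau-automorphic.  The coefficient of z_m^N in the rewritten
   relation is q(mu) for a polynomial q whose coefficients are those of the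
   top-degree part of P, distinct monomials going to distinct exponents by
   uniqueness of base-e digits.  As F is infinite and central in the division
   ring D, q(mu) <> 0 for some mu in F, so z_m is integral over D[w] and D[z]
   is finite over D[w]; induction on m ends with independent elements.  When
   the sigma_i have finite orders, d_i = K for a common period K gives
   tau = id. *)

Fixpoint iter_rmorph (R : pzRingType) (f : {rmorphism R -> R}) (k : nat) :
    {rmorphism R -> R} :=
  if k is k.+1 then (f \o iter_rmorph f k : {rmorphism R -> R}) else idfun.

Lemma iter_rmorphE (R : pzRingType) (f : {rmorphism R -> R}) k x :
  iter_rmorph f k x = iter k f x.
Proof. by elim: k => //= k ->. Qed.

Lemma iter_commute (T : Type) (f g : T -> T) k x :
  (forall y, f (g y) = g (f y)) -> iter k f (g x) = g (iter k f x).
Proof. by move=> fg; elim: k => //= k ->; rewrite fg. Qed.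

Lemma big_uniq_subset (T : eqType) (V : nmodType) (A B : seq T) (F : T -> V) :
    uniq A -> uniq B -> {subset B <= A} ->
    (forall x, x \in A -> x \notin B -> F x = 0) ->
  \sum_(x <- A) F x = \sum_(x <- B) F x.
Proof.
move=> uA uB sBA F0; rewrite (bigID (mem B)) /= [X in _ + X]big1_seq ?addr0; last first.
  by move=> x /andP[xB xA]; apply: F0.
rewrite -big_filter; apply/perm_big/uniq_perm; rewrite ?filter_uniq // => x.
by rewrite mem_filter; case: (boolP (x \in B)) => // /sBA ->.
Qed.

Section SkewPolynomialRing.
Variables (D : unitRingType) (n : nat) (sigma : 'I_n -> {rmorphism D -> D}).
Hypothesis sigma_comm : pairwise_commuting (fun i => (sigma i : D -> D)).
Local Notation s := (fun i => (sigma i : D -> D)).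

Definition sigma_seq (l : seq 'I_n) (al : 'X_{1..n}) : {rmorphism D -> D} :=
  foldr (fun i (f : {rmorphism D -> D}) =>
    (iter_rmorph (sigma i) (al i) \o f : {rmorphism D -> D})) idfun l.

Lemma sigma_seqE l al x :
  sigma_seq l al x = foldr (fun i f => iter (al i) (s i) \o f) id l x.
Proof. by elim: l x => //= i l IH x; rewrite iter_rmorphE IH. Qed.

Lemma sigma_monE al x : sigma_mon s al x = sigma_seq (enum 'I_n) al x.
Proof. by rewrite sigma_seqE. Qed.

Lemma sigma_seq_commute l al (g : D -> D) x :
  (forall i y, s i (g y) = g (s i y)) -> sigma_seq l al (g x) = g (sigma_seq l al x).
Proof.
move=> sg; rewrite !sigma_seqE; elim: l => //= i l ->.
by apply: iter_commute => y; apply: sg.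
Qed.

Lemma sigma_seq_addm l al be x :
  sigma_seq l (al + be)%MM x = sigma_seq l al (sigma_seq l be x).
Proof.
elim: l x => //= i l IH x; rewrite !iter_rmorphE IH mnmDE iterD; congr (iter _ _ _).
rewrite (@sigma_seq_commute l al (iter (be i) (s i))) // => j y.
by rewrite iter_commute // => z; apply: sigma_comm.
Qed.

Lemma sigma_seq_mnm0 l x : sigma_seq l 0%MM x = x.
Proof. by rewrite sigma_seqE; elim: l => //= i l ->; rewrite mnm0E. Qed.

Lemma sigma_seq_fixed l al c : (forall i, s i c = c) -> sigma_seq l al c = c.
Proof.
by move=> sc; rewrite sigma_seqE; elim: l => //= i l ->; apply: iter_fix.
Qed.

Lemma sigma_mon_mulmn1 j k x : sigma_mon s (U_(j) *+ k)%MM x = iter k (s j) x.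
Proof.
rewrite /sigma_mon; suff -> : forall l, foldr (fun i f => iter ((U_(j) *+ k)%MM i) (s i) \o f) id l x =
                    iter (k * count_mem j l) (s j) x.
  by rewrite count_uniq_mem ?enum_uniq ?mem_enum ?muln1.
elim=> [|i l IH] /=; first by rewrite muln0.
rewrite IH mulmnE mnm1E; case: (eqVneq i j) => [->|ne] /=.
  by rewrite mul1n -iterD mulnDr muln1 addnC.
by rewrite add0n.
Qed.

Local Notation sm := (skew_mul s).

Lemma skew_mul_supp (p q : {mpoly D[n]}) A B : uniq A -> uniq B ->
    {subset msupp p <= A} -> {subset msupp q <= B} ->
  sm p q = \sum_(al <- A) \sum_(be <- B)
             (p@_al * sigma_mon s al (q@_be)) *: 'X_[(al + be)%MM].
Proof.
move=> uA uB sA sB; rewrite /skew_mul -(big_uniq_subset uA (msupp_uniq p) sA); last first.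
  by move=> al _ /memN_msupp_eq0 ->; rewrite big1 // => be _; rewrite mul0r scale0r.
apply: eq_bigr => al _; rewrite -(big_uniq_subset uB (msupp_uniq q) sB) // => be _.
by move/memN_msupp_eq0 ->; rewrite sigma_monE rmorph0 mulr0 scale0r.
Qed.

Lemma skew_mulDl : left_distributive sm +%R.
Proof.
move=> p p' q; set A := undup (msupp p ++ msupp p' ++ msupp (p + p')).
have uA : uniq A := undup_uniq _.
have [sp sp' spp'] : [/\ {subset msupp p <= A}, {subset msupp p' <= A}
                       & {subset msupp (p + p') <= A}].
  by split=> x xP; rewrite mem_undup !mem_cat xP ?orbT.
rewrite !(skew_mul_supp uA (msupp_uniq q)) // -big_split; apply: eq_bigr => al _.
by rewrite -big_split; apply: eq_bigr => be _; rewrite mcoeffD mulrDl scalerDl.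
Qed.

Lemma skew_mulDr : right_distributive sm +%R.
Proof.
move=> p q q'; set B := undup (msupp q ++ msupp q' ++ msupp (q + q')).
have uB : uniq B := undup_uniq _.
have [sq sq' sqq'] : [/\ {subset msupp q <= B}, {subset msupp q' <= B}
                       & {subset msupp (q + q') <= B}].
  by split=> x xQ; rewrite mem_undup !mem_cat xQ ?orbT.
rewrite !(skew_mul_supp (msupp_uniq p) uB) // -big_split; apply: eq_bigr => al _.
rewrite -big_split; apply: eq_bigr => be _.
by rewrite mcoeffD !sigma_monE rmorphD mulrDr scalerDl.
Qed.

Lemma skew_mul0l q : sm 0 q = 0.
Proof. by rewrite /skew_mul msupp0 big_nil. Qed.

Lemma skew_mul0r p : sm p 0 = 0.
Proof. by rewrite /skew_mul msupp0; apply: big1 => al _; rewrite big_nil. Qed.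

Lemma skew_mul_monomials a b al be :
  sm (a *: 'X_[al]) (b *: 'X_[be]) = (a * sigma_mon s al b) *: 'X_[(al + be)%MM].
Proof.
have supp_aX c ga : {subset msupp (c *: 'X_[ga] : {mpoly D[n]}) <= [:: ga]}.
  by move=> x /msuppZ_le; rewrite msuppX.
rewrite (skew_mul_supp (A := [:: al]) (B := [:: be])) //.
by rewrite !big_seq1 !mcoeffZ !mcoeffX !eqxx !mulr1.
Qed.

Lemma skew_mul_suml (I : Type) (r : seq I) (F : I -> {mpoly D[n]}) q :
  sm (\sum_(i <- r) F i) q = \sum_(i <- r) sm (F i) q.
Proof. exact: (big_morph (sm^~ q) (fun p p' => skew_mulDl p p' q) (skew_mul0l q)). Qed.

Lemma skew_mul_sumr (I : Type) (r : seq I) (F : I -> {mpoly D[n]}) p :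
  sm p (\sum_(i <- r) F i) = \sum_(i <- r) sm p (F i).
Proof. exact: (big_morph (sm p) (skew_mulDr p) (skew_mul0r p)). Qed.

Lemma skew_mul_expandl p q : sm p q = \sum_(al <- msupp p) sm (p@_al *: 'X_[al]) q.
Proof. by rewrite {1}(mpolyE p) (skew_mul_suml _ (fun al => p@_al *: 'X_[al])). Qed.

Lemma skew_mul_expandr p q : sm p q = \sum_(be <- msupp q) sm p (q@_be *: 'X_[be]).
Proof. by rewrite {1}(mpolyE q) (skew_mul_sumr _ (fun be => q@_be *: 'X_[be])). Qed.

Lemma skew_mulA : associative sm.
Proof.
have monomialA a al b be c ga : sm (a *: 'X_[al]) (sm (b *: 'X_[be]) (c *: 'X_[ga])) =
                                sm (sm (a *: 'X_[al]) (b *: 'X_[be])) (c *: 'X_[ga]).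
  by rewrite !skew_mul_monomials !sigma_monE rmorphM sigma_seq_addm mulrA addmA.
move=> p q r; rewrite (skew_mul_expandl p (sm q r)) (skew_mul_expandl p q).
rewrite (skew_mul_suml _ (fun al => sm (p@_al *: 'X_[al]) q)); apply: eq_bigr => al _.
rewrite (skew_mul_expandl q r) (skew_mul_expandr _ q).
rewrite (skew_mul_sumr _ (fun be => sm (q@_be *: 'X_[be]) r)).
rewrite (skew_mul_suml _ (fun be => sm (p@_al *: 'X_[al]) (q@_be *: 'X_[be]))).
apply: eq_bigr => be _; rewrite (skew_mul_expandr _ r) (skew_mul_expandr _ r).
rewrite (skew_mul_sumr _ (fun ga => sm (q@_be *: 'X_[be]) (r@_ga *: 'X_[ga]))).
by apply: eq_bigr => ga _; apply: monomialA.
Qed.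

Lemma skew_mul1l : left_id 1 sm.
Proof.
move=> p; rewrite skew_mul_expandr [in RHS](mpolyE p); apply: eq_bigr => al _.
by rewrite -[1]scale1r -mpolyX0 skew_mul_monomials sigma_monE sigma_seq_mnm0 mul1r add0m.
Qed.

Lemma skew_mul1r : right_id 1 sm.
Proof.
move=> p; rewrite skew_mul_expandl [in RHS](mpolyE p); apply: eq_bigr => al _.
by rewrite -[1]scale1r -mpolyX0 skew_mul_monomials sigma_monE rmorph1 mulr1 addm0.
Qed.

(* The carrier is indexed by the commutation hypothesis, which associativity
   needs.  Its elements are those of {mpoly D[n]}: a product is the skew product
   only when typed in skew_poly. *)
Definition skew_poly of pairwise_commuting s : Type := {mpoly D[n]}.
HB.instance Definition _ := GRing.Zmodule.on (skew_poly sigma_comm).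
HB.instance Definition _ := GRing.Zmodule_isNzRing.Build (skew_poly sigma_comm)
  skew_mulA skew_mul1l skew_mul1r skew_mulDl skew_mulDr (oner_neq0 {mpoly D[n]}).

End SkewPolynomialRing.

Section SkewPolynomialCalculus.
Variables (D : unitRingType) (n : nat) (sigma : 'I_n -> {rmorphism D -> D}).
Hypothesis sigma_comm : pairwise_commuting (fun i => (sigma i : D -> D)).
Local Notation s := (fun i => (sigma i : D -> D)).
Local Notation R := (skew_poly sigma_comm).

Definition skew_const (c : D) : R := c%:MP.

Lemma skew_const_monomial c : skew_const c = c *: 'X_[0%MM] :> {mpoly D[n]}.
Proof. by rewrite mpolyX0 -mul_mpolyC mulr1. Qed.

Lemma skew_constM : {morph skew_const : a b / a * b}.
Proof.
move=> a b; rewrite /GRing.mul /= !skew_const_monomial skew_mul_monomials.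
by rewrite sigma_monE sigma_seq_mnm0 addm0.
Qed.

HB.instance Definition _ :=
  GRing.isZmodMorphism.Build D R skew_const (@mpolyCB n D).
HB.instance Definition _ :=
  GRing.isMonoidMorphism.Build D R skew_const (erefl, skew_constM).

Lemma skew_const_mul c (p : R) : skew_const c * p = (c *: (p : {mpoly D[n]}) : R).
Proof.
rewrite /GRing.mul /= skew_mul_expandr [in RHS](mpolyE p) scaler_sumr.
apply: eq_bigr => be _; rewrite skew_const_monomial skew_mul_monomials.
by rewrite sigma_monE sigma_seq_mnm0 add0m scalerA.
Qed.

Lemma skew_polyE (p : R) : p = \sum_(al <- msupp p) skew_const p@_al * 'X_[al].
Proof. by rewrite {1}(mpolyE p); apply: eq_bigr => al _; rewrite skew_const_mul. Qed.

Lemma skew_mulX al be : ('X_[al] : R) * 'X_[be] = 'X_[(al + be)%MM].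
Proof.
rewrite /GRing.mul /= -[X in skew_mul _ X _]scale1r -[X in skew_mul _ _ X]scale1r.
by rewrite skew_mul_monomials sigma_monE rmorph1 mulr1 scale1r.
Qed.

Lemma skew_expX al k : ('X_[al] : R) ^+ k = 'X_[(al *+ k)%MM].
Proof.
elim: k => [|k IH]; first by rewrite expr0 mulm0n mpolyX0.
by rewrite exprS IH skew_mulX mulmS.
Qed.

Lemma skew_mulXC al b :
  ('X_[al] : R) * skew_const b = skew_const (sigma_mon s al b) * 'X_[al].
Proof.
rewrite skew_const_mul /GRing.mul /= skew_const_monomial -[X in skew_mul _ X _]scale1r.
by rewrite skew_mul_monomials mul1r addm0.
Qed.

Lemma skew_const_fixed_center c (p : R) :
  fixed_center s c -> GRing.comm p (skew_const c).
Proof.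
case=> c_central c_fixed; rewrite /GRing.comm skew_const_mul /GRing.mul /=.
rewrite skew_mul_expandl [in RHS](mpolyE p) scaler_sumr; apply: eq_bigr => al _.
rewrite skew_const_monomial skew_mul_monomials sigma_monE sigma_seq_fixed //.
by rewrite addm0 scalerA c_central.
Qed.

Lemma iter_skew_mul (a : R) k : iter k (skew_mul s a) 1 = a ^+ k.
Proof. by elim: k => //= k ->; rewrite exprS. Qed.

Lemma skew_monomialE m (a : 'I_m -> R) (be : 'X_{1..m}) :
  skew_monomial s a be = \prod_(i <- enum 'I_m) a i ^+ be i.
Proof.
rewrite /skew_monomial; elim: (enum 'I_m) => [|i l IH] /=; first by rewrite big_nil.
by rewrite big_cons IH iter_skew_mul.
Qed.

End SkewPolynomialCalculus.

Section FixedCenter.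
Variables (D : unitRingType) (n : nat) (sigma : 'I_n -> {rmorphism D -> D}).
Local Notation F := (fixed_center (fun i => (sigma i : D -> D))).

Lemma fixed_center1 : F 1.
Proof. by split=> [y|i]; rewrite ?mul1r ?mulr1 ?rmorph1. Qed.

Lemma fixed_centerM a b : F a -> F b -> F (a * b).
Proof.
move=> [a_central a_fixed] [b_central b_fixed].
split=> [y|i]; last by rewrite rmorphM a_fixed b_fixed.
by rewrite -mulrA b_central mulrA a_central mulrA.
Qed.

Lemma fixed_centerX a k : F a -> F (a ^+ k).
Proof.
move=> Fa; elim: k => [|k IH]; first exact: fixed_center1.
by rewrite exprS; apply: fixed_centerM.
Qed.

End FixedCenter.

Section QuotientCalculus.
Variables (D : unitRingType) (n : nat) (sigma : 'I_n -> {rmorphism D -> D}).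
Hypothesis sigma_comm : pairwise_commuting (fun i => (sigma i : D -> D)).
Local Notation s := (fun i => (sigma i : D -> D)).
Local Notation R := (skew_poly sigma_comm).
Local Notation C := (@skew_const D n sigma sigma_comm).
Variable I : {mpoly D[n]} -> Prop.
Hypothesis I_ideal : proper_twosided_ideal s I.

Lemma ideal0 : I 0. Proof. by case: I_ideal. Qed.

Lemma idealB (x y : R) : I x -> I y -> I (x - y).
Proof. by case: I_ideal => _ IB _ _ _; apply: IB. Qed.

Lemma idealMl (r x : R) : I x -> I (r * x).
Proof. by case: I_ideal => _ _ IMl _ _; apply: IMl. Qed.

Lemma idealMr (r x : R) : I x -> I (x * r).
Proof. by case: I_ideal => _ _ _ IMr _; apply: IMr. Qed.

Lemma ideal_neq1 : ~ I (1 : R).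
Proof. by case: I_ideal. Qed.

Lemma idealN (x : R) : I x -> I (- x).
Proof. by move=> Ix; rewrite -sub0r; apply: idealB => //; apply: ideal0. Qed.

Lemma idealD (x y : R) : I x -> I y -> I (x + y).
Proof. by move=> Ix Iy; rewrite -[y]opprK; apply/idealB/idealN. Qed.

Lemma ideal_eq (x y : R) : x = y -> I (x - y).
Proof. by move=> ->; rewrite subrr; apply: ideal0. Qed.

Lemma ideal_sum (T : Type) (r : seq T) (f : T -> R) :
  (forall i, I (f i)) -> I (\sum_(i <- r) f i).
Proof. by move=> If; elim/big_ind: _ => //; [apply: ideal0 | apply: idealD]. Qed.

Section GeneratedSubring.
Variables (m : nat) (z : 'I_m -> R).
Local Notation gen := (gen_subring s z).

Lemma gen_subringC c : gen (C c). Proof. exact: gen_const. Qed.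
Lemma gen_subring0 : gen 0. Proof. by rewrite -(rmorph0 C); apply: gen_subringC. Qed.
Lemma gen_subring1 : gen 1. Proof. exact: (gen_subringC 1). Qed.
Lemma gen_subringD (x y : R) : gen x -> gen y -> gen (x + y). Proof. exact: gen_add. Qed.
Lemma gen_subringN (x : R) : gen x -> gen (- x). Proof. exact: gen_opp. Qed.
Lemma gen_subringM (x y : R) : gen x -> gen y -> gen (x * y). Proof. exact: gen_mul. Qed.

Lemma gen_subringX (x : R) k : gen x -> gen (x ^+ k).
Proof.
move=> gx; elim: k => [|k IH]; first exact: gen_subring1.
by rewrite exprS; apply: gen_subringM.
Qed.

Lemma gen_subring_sum (T : Type) (r : seq T) (f : T -> R) :
  (forall i, gen (f i)) -> gen (\sum_(i <- r) f i).
Proof. by move=> gf; elim/big_ind: _ => //; [apply: gen_subring0 | apply: gen_subringD]. Qed.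

End GeneratedSubring.

Variable tau : {rmorphism D -> D}.

Definition automorphic (y : R) := forall b, y * C b = C (tau b) * y.

Lemma automorphicB (x y : R) : automorphic x -> automorphic y -> automorphic (x - y).
Proof. by move=> ax ay b; rewrite mulrBl mulrBr ax ay. Qed.

Lemma automorphic_fixed_centerM c (y : R) :
  fixed_center s c -> automorphic y -> automorphic (C c * y).
Proof.
move=> Fc ay b; rewrite -mulrA ay !mulrA; congr (_ * _).
by rewrite -(skew_const_fixed_center _ Fc).
Qed.

End QuotientCalculus.

Lemma sum_digits_inj e k (f g : 'I_k -> nat) :
    (forall j, f j < e)%N -> (forall j, g j < e)%N ->
  (\sum_(j < k) f j * e ^ j = \sum_(j < k) g j * e ^ j)%N -> f =1 g.
Proof.
elim: k f g => [|k IH] f g f_lt g_lt; first by move=> _ [].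
have e_gt0 : (0 < e)%N by apply: leq_ltn_trans (f_lt ord0).
have digitsE (h : 'I_k.+1 -> nat) : (\sum_(i < k.+1) h i * e ^ i =
    (\sum_(i < k) h (lift ord0 i) * e ^ i) * e + h ord0)%N.
  rewrite big_ord_recl expn0 muln1 addnC big_distrl; congr (_ + _)%N.
  by apply: eq_bigr => i _; rewrite lift0 expnS mulnCA mulnC.
rewrite !digitsE => eq_sum.
have eq0 : f ord0 = g ord0.
  by have := congr1 (modn^~ e) eq_sum; rewrite /= !modnMDl !modn_small.
move: eq_sum; rewrite eq0 => /addIn /eqP; rewrite eqn_pmul2r // => /eqP eq_high.
have eq_lift := IH _ _ (fun j => f_lt _) (fun j => g_lt _) eq_high.
by move=> j; case: (unliftP ord0 j) => [j' ->|->].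
Qed.

Lemma ltn_neq_ord_max m (i : 'I_m.+1) : i != ord_max -> (i < m)%N.
Proof. by rewrite -val_eqE /= -ltnS ltn_neqAle ltn_ord andbT. Qed.

Definition shift_weight m (e : nat) (be : 'X_{1..m.+1}) : nat :=
  \sum_(j < m) be (widen_ord (leqnSn m) j) * e ^ j.

Lemma shift_weight_inj m e (b b' : 'X_{1..m.+1}) :
    (forall i, b i < e)%N -> (forall i, b' i < e)%N ->
  mdeg b = mdeg b' -> shift_weight e b = shift_weight e b' -> b = b'.
Proof.
move=> b_lt b'_lt eq_deg /(sum_digits_inj (fun j => b_lt _) (fun j => b'_lt _)) eq_low.
have eq_max : b ord_max = b' ord_max.
  move: eq_deg; rewrite !mdegE !big_ord_recr /=.
  by rewrite (eq_bigr _ (fun j _ => eq_low j)) => /addnI.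
apply/mnmP => i; case: (unliftP ord_max i) => [j ->|->] //.
by rewrite (_ : lift _ j = widen_ord (leqnSn m) j) ?eq_low //; apply/val_inj/lift_max.
Qed.

(* Substituting z_j = w_j + mu^(e^j) z_m (j < m) turns a monomial z^b of top
   degree into mu^(shift_weight e b) z_m^(mdeg b) plus lower powers of z_m. *)
Definition top_coef (D : nzRingType) m (mu : D) (e : nat) (P : {mpoly D[m.+1]}) : D :=
  \sum_(b <- msupp P | mdeg b == (msize P).-1) P@_b * mu ^+ shift_weight e b.

Lemma infinite_pred_uniq_seq (T : eqType) (P : T -> Prop) k : infinite_pred P ->
  exists rs : seq T, [/\ uniq rs, size rs = k & forall x, x \in rs -> P x].
Proof.
move=> P_inf; elim: k => [|k [rs [rs_uniq rs_size rsP]]]; first by exists [::].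
have [[x [Px x_rs]]|] := classic (exists x, P x /\ x \notin rs).
  exists (x :: rs); split=> /=; [by rewrite x_rs | by rewrite rs_size |].
  by move=> y; rewrite in_cons => /predU1P[->|/rsP].
move=> no_new; case: P_inf; exists rs => x Px; apply/negPn/negP => x_rs.
by apply: no_new; exists x.
Qed.

Section NormalizingScalar.
Variables (D : unitRingType) (n : nat) (sigma : 'I_n -> {rmorphism D -> D}).
Local Notation F := (fixed_center (fun i => (sigma i : D -> D))).
Hypothesis D_division : is_division_ring D.
Hypothesis F_infinite : infinite_pred F.

Lemma uniq_roots_fixed_center rs : uniq rs -> (forall x, x \in rs -> F x) -> uniq_roots rs.
Proof.
elim: rs => [//|x rs IH] /= /andP[x_rs rs_uniq] rsF; apply/andP; split; last first.
  by apply: IH => // y y_rs; apply: rsF; rewrite in_cons y_rs orbT.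
apply/allP => y y_rs; rewrite /diff_roots; apply/andP; split.
  by have [x_central _] := rsF x (mem_head _ _); rewrite x_central.
by apply: D_division; rewrite subr_eq0; apply: contraNneq x_rs => <-.
Qed.

Lemma exists_top_coef_neq0 m (P : {mpoly D[m.+1]}) : P != 0 ->
  exists2 mu, F mu & top_coef mu (msize P) P != 0.
Proof.
move=> P_neq0; set N := (msize P).-1; set e := msize P.
have b_lt b : b \in msupp P -> forall i, (b i < e)%N.
  move=> /msize_mdeg_lt b_lt i; apply: leq_ltn_trans b_lt.
  by rewrite mdegE (bigD1 i) //= leq_addr.
pose b0 := mlead P; have b0_supp : b0 \in msupp P by apply: mlead_supp.
have b0_deg : mdeg b0 = N by rewrite /N -mlead_deg.
pose q : {poly D} := \sum_(b <- msupp P | mdeg b == N) P@_b *: 'X^(shift_weight e b).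
have q_b0 : q`_(shift_weight e b0) = P@_b0.
  rewrite /q coef_sum big_seq_cond big_mkcond (bigD1_seq b0) ?msupp_uniq //=.
  rewrite b0_supp b0_deg eqxx coefZ coefXn eqxx mulr1 big1 ?addr0 // => b b_neq.
  case: ifP => [/andP[b_supp /eqP b_deg]|_] //; rewrite coefZ coefXn.
  case: eqP => [eq_w|]; last by rewrite mulr0.
  case/eqP: b_neq; apply: (shift_weight_inj (b_lt _ b_supp) (b_lt _ b0_supp)).
    by rewrite b_deg b0_deg.
  by rewrite eq_w.
have q_neq0 : q != 0.
  by apply: contraTneq b0_supp => q0; rewrite mcoeff_msupp -q_b0 q0 coef0 eqxx.
have [rs [rs_uniq rs_size rsF]] := infinite_pred_uniq_seq (size q) F_infinite.
have [all_roots|/allPn[mu mu_rs mu_root]] := boolP (all (root q) rs).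
  have := max_ring_poly_roots q_neq0 all_roots (uniq_roots_fixed_center rs_uniq rsF).
  by rewrite rs_size ltnn.
exists mu; first exact: rsF.
by move: mu_root; rewrite rootE /q horner_sum; under eq_bigr do rewrite hornerZ hornerXn.
Qed.

End NormalizingScalar.

Section Normalization.
Variables (D : unitRingType) (n : nat) (sigma : 'I_n -> {rmorphism D -> D}).
Hypothesis sigma_comm : pairwise_commuting (fun i => (sigma i : D -> D)).
Local Notation s := (fun i => (sigma i : D -> D)).
Local Notation R := (skew_poly sigma_comm).
Local Notation C := (@skew_const D n sigma sigma_comm).
Local Notation F := (fixed_center s).
Variable I : {mpoly D[n]} -> Prop.
Hypothesis I_ideal : proper_twosided_ideal s I.
Variable tau : {rmorphism D -> D}.
Local Notation automorphic := (@automorphic D n sigma sigma_comm tau).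
Hypothesis D_division : is_division_ring D.
Hypothesis F_infinite : infinite_pred F.

Section PowerSpan.
Variables (m : nat) (w : 'I_m -> R) (z : R).
Local Notation gen := (gen_subring s w).

(* v lies in the left D[w]-module spanned by 1, z, ..., z^(K-1). *)
Fixpoint pow_span (K : nat) (v : R) : Prop :=
  if K is K.+1 then exists (t v' : R), [/\ gen t, pow_span K v' & v = v' + t * z ^+ K]
  else v = 0.

Lemma pow_span0 K : pow_span K 0.
Proof.
elim: K => [|K IH] //=; exists 0, 0; split=> //; first exact: gen_subring0.
by rewrite mul0r addr0.
Qed.

Lemma pow_spanD K (v1 v2 : R) : pow_span K v1 -> pow_span K v2 -> pow_span K (v1 + v2).
Proof.
elim: K v1 v2 => [|K IH] v1 v2 /=; first by move=> -> ->; rewrite addr0.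
move=> [t1 [u1 [g1 s1 ->]]] [t2 [u2 [g2 s2 ->]]].
exists (t1 + t2), (u1 + u2); split; [exact: gen_subringD | exact: IH |].
by rewrite mulrDl addrACA.
Qed.

Lemma pow_spanN K (v : R) : pow_span K v -> pow_span K (- v).
Proof.
elim: K v => [|K IH] v /=; first by move=> ->; rewrite oppr0.
move=> [t [u [gt su ->]]]; exists (- t), (- u); split; [exact: gen_subringN | exact: IH |].
by rewrite opprD mulNr.
Qed.

Lemma pow_span_sum K (T : eqType) (r : seq T) (f : T -> R) :
  (forall i, i \in r -> pow_span K (f i)) -> pow_span K (\sum_(i <- r) f i).
Proof.
by move=> sf; rewrite big_seq; elim/big_ind: _ => //; [apply: pow_span0 | apply: pow_spanD].
Qed.

Lemma pow_spanS K (v : R) : pow_span K v -> pow_span K.+1 v.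
Proof. by move=> sv; exists 0, v; split=> //; [exact: gen_subring0 | rewrite mul0r addr0]. Qed.

Lemma pow_span_le K K' (v : R) : (K <= K')%N -> pow_span K v -> pow_span K' v.
Proof.
move=> /subnK <- sv; elim: (K' - K)%N => [|k IH] //.
by rewrite addSn; apply: pow_spanS.
Qed.

Lemma pow_spanMl K (t v : R) : gen t -> pow_span K v -> pow_span K (t * v).
Proof.
move=> gt; elim: K v => [|K IH] v /=; first by move=> ->; rewrite mulr0.
move=> [t1 [u [g1 su ->]]]; exists (t * t1), (t * u); split; [exact: gen_subringM | exact: IH |].
by rewrite mulrDr mulrA.
Qed.

Lemma pow_span_term K k (t : R) : gen t -> (k < K)%N -> pow_span K (t * z ^+ k).
Proof.
move=> gt; elim: K => [|K IH] //; rewrite ltnS leq_eqVlt => /predU1P[->|lt_kK].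
  by exists t, 0; split=> //; [exact: pow_span0 | rewrite add0r].
exact/pow_spanS/IH.
Qed.

Lemma pow_spanE K (v : R) : pow_span K v ->
  exists2 h : nat -> R, (forall k, gen (h k)) & v = \sum_(k < K) h k * z ^+ k.
Proof.
elim: K v => [|K IH] v /=.
  by move=> ->; exists (fun _ => 0); [move=> _; exact: gen_subring0 | rewrite big_ord0].
move=> [t [u [gt su ->]]]; have [h gh ->] := IH _ su.
exists (fun k => if k == K then t else h k); first by move=> k; case: ifP.
rewrite big_ord_recr /= eqxx; congr (_ + _); apply: eq_bigr => i _.
by rewrite ltn_eqF.
Qed.

Hypothesis z_aut : automorphic z.
Hypothesis z_comm : forall i, GRing.comm z (w i).

Lemma gen_subring_twist (t : R) : gen t -> exists2 t' : R, gen t' & z * t = t' * z.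
Proof.
elim=> [c|i|x y _ [x' gx' zx] _ [y' gy' zy]|x _ [x' gx' zx]|x y _ [x' gx' zx] _ [y' gy' zy]].
- by exists (C (tau c)); [apply: gen_subringC | apply: z_aut].
- by exists (w i); [apply: gen_var | apply: z_comm].
- by exists (x' + y'); [apply: gen_subringD | rewrite mulrDr mulrDl zx zy].
- by exists (- x'); [apply: gen_subringN | rewrite mulrN mulNr zx].
- exists (x' * y'); first exact: gen_subringM.
  by rewrite -[skew_mul _ x y]/((x : R) * y) mulrA zx -mulrA zy mulrA.
Qed.

Lemma pow_spanMz K (v : R) : pow_span K v -> pow_span K.+1 (z * v).
Proof.
elim: K v => [|K IH] v /=.
  by move=> ->; exists 0, 0; split=> //; [exact: gen_subring0 | rewrite mulr0 mul0r addr0].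
move=> [t [u [gt su ->]]]; have [t' gt' zt] := gen_subring_twist gt.
exists t', (z * u); split=> //; first exact: IH.
by rewrite mulrDr mulrA zt -mulrA -exprS.
Qed.

End PowerSpan.

Definition skew_eval m (z : 'I_m -> R) (P : {mpoly D[m]}) : R :=
  \sum_(b <- msupp P) C P@_b * skew_monomial s z b.

Definition finite_over (G H : R -> Prop) := exists (T : finType) (r : T -> R),
  forall u, H u -> exists2 t : T -> R, (forall j, G (t j)) & I (u - \sum_j t j * r j).

Lemma finite_over_refl G : finite_over G G.
Proof.
exists 'I_1, (fun _ => 1) => u Gu; exists (fun _ => u) => [_ //|].
by rewrite big_ord1 mulr1 subrr; apply: (ideal0 I_ideal).
Qed.

Lemma finite_over_trans G1 G2 H : finite_over G1 H -> finite_over G2 G1 -> finite_over G2 H.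
Proof.
move=> [T1 [r1 fin1]] [T2 [r2 fin2]]; exists (T1 * T2)%type, (fun p => r2 p.2 * r1 p.1).
move=> u Hu; have [t1 G1t1 It1] := fin1 u Hu.
have t2P j : exists t : {ffun T2 -> R},
    (forall k, G2 (t k)) /\ I (t1 j - \sum_k t k * r2 k).
  have [t G2t It] := fin2 _ (G1t1 j).
  by exists (finfun t); split=> [k|]; rewrite ?ffunE //; under eq_bigr do rewrite ffunE.
have [t2 {}t2P] := fin_all_exists t2P.
exists (fun p => t2 p.1 p.2) => [[j k]|]; first by case: (t2P j).
rewrite -(pair_bigA _ (fun j k => t2 j k * (r2 k * r1 j))) /=.
have -> : \sum_j \sum_k t2 j k * (r2 k * r1 j) = \sum_j (\sum_k t2 j k * r2 k) * r1 j.
  by apply: eq_bigr => j _; rewrite mulr_suml; apply: eq_bigr => k _; rewrite mulrA.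
have Ir : I (\sum_j (t1 j - \sum_k t2 j k * r2 k) * r1 j).
  by apply: (ideal_sum I_ideal) => j; apply: (idealMr I_ideal); case: (t2P j).
have := idealD I_ideal It1 Ir.
have -> : \sum_j (t1 j - \sum_k t2 j k * r2 k) * r1 j =
    \sum_j t1 j * r1 j - \sum_j (\sum_k t2 j k * r2 k) * r1 j.
  by rewrite -sumrB; apply: eq_bigr => j _; rewrite mulrBl.
by rewrite addrA subrK.
Qed.

Section NormalizingStep.
Variables (m : nat) (z : 'I_m.+1 -> R).
Hypothesis z_comm : forall i j, GRing.comm (z i) (z j).
Hypothesis z_aut : forall i, automorphic (z i).
Variables (mu : D) (e : nat).
Hypothesis F_mu : F mu.
Local Notation zm := (z ord_max).

Definition shift_coef (i : nat) : D := mu ^+ (e ^ i).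

Definition shifted (j : 'I_m) : R := z (widen_ord (leqnSn m) j) - C (shift_coef j) * zm.

Lemma fixed_center_shift_coef i : F (shift_coef i).
Proof. exact: fixed_centerX. Qed.

Lemma comm_shift_coef (x : R) i : GRing.comm x (C (shift_coef i)).
Proof. exact/skew_const_fixed_center/fixed_center_shift_coef. Qed.

Lemma automorphic_shifted j : automorphic (shifted j).
Proof.
apply: automorphicB => //; apply: automorphic_fixed_centerM => //.
exact: fixed_center_shift_coef.
Qed.

Lemma comm_z_shifted i j : GRing.comm (z i) (shifted j).
Proof. by apply: commrB; [|apply: commrM]; [apply: z_comm|apply: comm_shift_coef|apply: z_comm]. Qed.

Lemma comm_shifted i j : GRing.comm (shifted i) (shifted j).
Proof.
apply: commrB; first exact/commr_sym/comm_z_shifted.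
by apply: commrM; [apply: comm_shift_coef | apply/commr_sym/comm_z_shifted].
Qed.

Local Notation pow_span := (pow_span shifted zm).

Definition leads K c (v : R) := pow_span K (v - C c * zm ^+ K).

Lemma leads_mulz K c v : F c -> leads K c v -> leads K.+1 c (zm * v).
Proof.
move=> Fc lv; rewrite /leads.
have -> : zm * v - C c * zm ^+ K.+1 = zm * (v - C c * zm ^+ K).
  by rewrite mulrBr exprS !mulrA (skew_const_fixed_center zm Fc).
exact: (pow_spanMz (z_aut ord_max) (comm_z_shifted _)).
Qed.

Lemma z_shiftedE (i : 'I_m.+1) (lt_im : (i < m)%N) :
  z i = shifted (Ordinal lt_im) + C (shift_coef i) * zm.
Proof. by rewrite /shifted addrNK; congr (z _); apply: val_inj. Qed.

Lemma leads_mul (i : 'I_m.+1) K c v : (i < m)%N -> F c -> leads K c v ->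
  leads K.+1 (shift_coef i * c) (z i * v).
Proof.
move=> lt_im Fc lv; rewrite /leads (z_shiftedE lt_im); set y := shifted _.
have -> : (y + C (shift_coef i) * zm) * v - C (shift_coef i * c) * zm ^+ K.+1 =
    y * (v - C c * zm ^+ K) + (y * C c) * zm ^+ K
    + C (shift_coef i) * (zm * v - C c * zm ^+ K.+1).
  by rewrite rmorphM mulrDl !mulrBr !mulrA subrK addrA.
have gy : gen_subring s shifted y by apply: gen_var.
apply: pow_spanD; first apply: pow_spanD.
- exact/pow_spanS/pow_spanMl.
- by apply: pow_span_term => //; apply: gen_subringM => //; apply: gen_subringC.
- by apply: pow_spanMl; [apply: gen_subringC | apply: leads_mulz].
Qed.

Lemma leads_prod (be : 'X_{1..m.+1}) (l : seq 'I_m.+1) :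
  leads (\sum_(i <- l) be i) (mu ^+ \sum_(i <- l | i != ord_max) be i * e ^ i)
        (\prod_(i <- l) z i ^+ be i).
Proof.
elim: l => [|i l IH]; first by rewrite /leads !big_nil expr0 mulr1 subrr.
have F_muX k : F (mu ^+ k) by apply: fixed_centerX.
rewrite !big_cons; case: (eqVneq i ord_max) => [->|ne] /=.
  elim: (be ord_max) => [|k IHk]; first by rewrite expr0 mul1r.
  by rewrite exprS -mulrA addSn; apply: leads_mulz (F_muX _) IHk.
have lt_im := ltn_neq_ord_max ne.
elim: (be i) => [|k IHk]; first by rewrite expr0 mul1r mul0n add0n.
rewrite exprS -mulrA addSn mulSn -addnA exprD -/(shift_coef i).
exact: leads_mul lt_im (F_muX _) IHk.
Qed.

Lemma leads_monomial (be : 'X_{1..m.+1}) :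
  leads (mdeg be) (mu ^+ shift_weight e be) (skew_monomial s z be).
Proof.
have := leads_prod be (enum 'I_m.+1); rewrite -skew_monomialE big_enum mdegE.
congr (leads _ (mu ^+ _) _); rewrite big_enum_cond /= big_mkcond big_ord_recr /=.
by rewrite eqxx addn0; apply: eq_bigr => j _; rewrite -val_eqE /= neq_ltn ltn_ord.
Qed.

Variable P : {mpoly D[m.+1]}.
Local Notation N := (msize P).-1.

Lemma mdeg_le_top b : b \in msupp P -> (mdeg b <= N)%N.
Proof. by move/msize_mdeg_lt; case: (msize P). Qed.

Lemma leads_eval : leads N (top_coef mu e P) (skew_eval z P).
Proof.
rewrite /leads /skew_eval /top_coef rmorph_sum mulr_suml [X in _ - X]big_mkcond -sumrB.
apply: pow_span_sum => b b_supp; have := leads_monomial b; rewrite /leads => lb.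
case: (eqVneq (mdeg b) N) => [<-|ne].
  by rewrite rmorphM -mulrA -mulrBr; apply: pow_spanMl => //; apply: gen_subringC.
rewrite subr0.
have -> : C P@_b * skew_monomial s z b =
    C P@_b * (skew_monomial s z b - C (mu ^+ shift_weight e b) * zm ^+ mdeg b)
    + C (P@_b * mu ^+ shift_weight e b) * zm ^+ mdeg b.
  by rewrite rmorphM mulrBr -mulrA subrK.
have le_bN := mdeg_le_top b_supp.
apply: pow_spanD; first by apply: (pow_span_le le_bN); apply: pow_spanMl => //; apply: gen_subringC.
by apply: pow_span_term; [apply: gen_subringC | rewrite ltn_neqAle ne le_bN].
Qed.

Hypothesis I_eval : I (skew_eval z P).
Hypothesis top_coef_neq0 : top_coef mu e P != 0.

Lemma monic_relation : exists2 g, pow_span N g & I (zm ^+ N + g).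
Proof.
set c := top_coef mu e P; have c_unit : c \is a GRing.unit by apply: D_division.
exists (C c^-1 * (skew_eval z P - C c * zm ^+ N)).
  by apply: pow_spanMl; [apply: gen_subringC | apply: leads_eval].
have := idealMl I_ideal (C c^-1) I_eval.
by rewrite mulrBr mulrA -rmorphM (mulVr c_unit) rmorph1 mul1r addrC subrK.
Qed.

Lemma top_deg_gt0 : (0 < N)%N.
Proof.
have [g] := monic_relation; case: N => [|//] /= ->.
by rewrite addr0 expr0 => /(ideal_neq1 I_ideal).
Qed.

Definition pow_span_mod (v : R) := exists2 v', pow_span N v' & I (v - v').

Lemma pow_span_mod_trans (a b : R) : I (a - b) -> pow_span_mod b -> pow_span_mod a.
Proof.
move=> Iab [v' sv' Ibv]; exists v' => //.
by have := idealD I_ideal Iab Ibv; rewrite addrA subrK.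
Qed.

Lemma pow_span_mod_span v : pow_span N v -> pow_span_mod v.
Proof. by exists v => //; apply: ideal_eq. Qed.

Lemma pow_span_modD a b : pow_span_mod a -> pow_span_mod b -> pow_span_mod (a + b).
Proof.
move=> [a' sa Ia] [b' sb Ib]; exists (a' + b'); first exact: pow_spanD.
by have := idealD I_ideal Ia Ib; rewrite addrACA opprD.
Qed.

Lemma pow_span_modN a : pow_span_mod a -> pow_span_mod (- a).
Proof.
move=> [a' sa Ia]; exists (- a'); first exact: pow_spanN.
by rewrite -opprD; apply: (idealN I_ideal).
Qed.

Lemma pow_span_modMl (t v : R) : gen_subring s shifted t -> pow_span_mod v ->
  pow_span_mod (t * v).
Proof.
move=> gt [v' sv Iv]; exists (t * v'); first exact: pow_spanMl.
by rewrite -mulrBr; apply: (idealMl I_ideal).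
Qed.

Lemma pow_span_modMz v : pow_span_mod v -> pow_span_mod (zm * v).
Proof.
have [g sg Ig] := monic_relation.
have zm_comm := comm_z_shifted ord_max; have zm_aut := z_aut ord_max.
suff zm_span u : pow_span N u -> pow_span_mod (zm * u).
  move=> [v' sv Iv]; apply: (pow_span_mod_trans _ (zm_span _ sv)).
  by rewrite -mulrBr; apply: (idealMl I_ideal).
move: top_deg_gt0 sg Ig; case N_eq: N => [//|K] _ sg Ig /= [t [u1 [gt su1 ->]]].
have [t' gt' zt] := gen_subring_twist zm_aut zm_comm gt.
rewrite mulrDr mulrA zt -mulrA -exprS; apply: pow_span_modD.
  by apply: pow_span_mod_span; rewrite N_eq; apply: pow_spanMz.
apply: (@pow_span_mod_trans _ (- (t' * g))).
  by rewrite opprK -mulrDr; apply: (idealMl I_ideal).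
by apply: pow_span_mod_span; rewrite N_eq; apply/pow_spanN/pow_spanMl.
Qed.

Lemma gen_subring_pow_span_mod (u : R) : gen_subring s z u ->
  forall v, pow_span_mod v -> pow_span_mod (u * v).
Proof.
elim=> [c|i|x y _ IHx _ IHy|x _ IHx|x y _ IHx _ IHy] v sv.
- by apply: pow_span_modMl => //; apply: gen_subringC.
- case: (eqVneq i ord_max) => [->|ne]; first exact: pow_span_modMz.
  rewrite (z_shiftedE (ltn_neq_ord_max ne)) mulrDl -mulrA; apply: pow_span_modD.
    by apply: pow_span_modMl => //; apply: gen_var.
  by apply: pow_span_modMl; [apply: gen_subringC | apply: pow_span_modMz].
- by rewrite mulrDl; apply: pow_span_modD; [apply: IHx | apply: IHy].
- by rewrite mulNr; apply: pow_span_modN; apply: IHx.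
- by rewrite -[skew_mul _ x y]/((x : R) * y) -mulrA; apply/IHx/IHy.
Qed.

Lemma finite_over_shifted : finite_over (gen_subring s shifted) (gen_subring s z).
Proof.
exists 'I_N, (fun k : 'I_N => zm ^+ k) => u gu.
have [|v' sv Iv] := gen_subring_pow_span_mod gu (v := 1).
  apply: pow_span_mod_span; rewrite -[1](mulr1 1) -[X in _ * X](expr0 zm).
  by apply: pow_span_term; [apply: gen_subring1 | apply: top_deg_gt0].
have [h gh ev] := pow_spanE sv; exists (fun k : 'I_N => h k) => //.
by rewrite -ev -[u]mulr1.
Qed.

End NormalizingStep.
Lemma ideal_skew_const c : I (C c) -> c = 0.
Proof.
move=> Ic; apply/eqP/contraT => /D_division c_unit.
have := idealMl I_ideal (C c^-1) Ic.
by rewrite -rmorphM mulVr // rmorph1 => /(ideal_neq1 I_ideal).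
Qed.

Definition skew_independent m (y : 'I_m -> R) :=
  forall P : {mpoly D[m]}, I (skew_eval y P) -> P = 0.

Lemma skew_independent0 (z : 'I_0 -> R) : skew_independent z.
Proof.
move=> P; rewrite (nvar0_mpolyC P) /skew_eval msuppC.
case: eqP => [-> //|_]; rewrite big_seq1 mcoeffC eqxx mulr1.
by rewrite skew_monomialE enum_ord0 big_nil mulr1 => /ideal_skew_const ->.
Qed.

Lemma noether_normalization m (z : 'I_m -> R) :
    (forall i j, GRing.comm (z i) (z j)) -> (forall i, automorphic (z i)) ->
  exists m' (y : 'I_m' -> R), [/\ forall i j, GRing.comm (y i) (y j),
    forall i, automorphic (y i), skew_independent y
    & finite_over (gen_subring s y) (gen_subring s z)].
Proof.
elim: m z => [|m IH] z z_comm z_aut.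
  by exists 0%N, z; split=> //; [apply: skew_independent0 | apply: finite_over_refl].
have [z_indep|] := classic (skew_independent z).
  by exists m.+1, z; split=> //; apply: finite_over_refl.
case/not_all_ex_not => P /(imply_to_and (I _))[IP /eqP P_neq0].
have [mu F_mu top_neq0] := exists_top_coef_neq0 D_division F_infinite P_neq0.
have [m' [y [y_comm y_aut y_indep fin_y]]] :=
  IH _ (comm_shifted z_comm (msize P) F_mu) (automorphic_shifted z_aut (msize P) F_mu).
exists m', y; split=> //.
exact: finite_over_trans (finite_over_shifted z_comm z_aut F_mu IP top_neq0) fin_y.
Qed.

Section PowerVariables.
Variable d : 'I_n -> nat.
Hypothesis d_gt0 : forall i, (0 < d i)%N.
Hypothesis d_tau : forall i x, iter (d i) (sigma i) x = tau x.

Definition power_var (j : 'I_n) : R := 'X_[(U_(j) *+ d j)%MM].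

Lemma comm_power_var i j : GRing.comm (power_var i) (power_var j).
Proof. by rewrite /GRing.comm /power_var !skew_mulX addmC. Qed.

Lemma automorphic_power_var j : automorphic (power_var j).
Proof. by move=> b; rewrite skew_mulXC sigma_mon_mulmn1 d_tau. Qed.

Lemma gen_subring_power_monomial (k : 'I_n -> nat) (l : seq 'I_n) :
  gen_subring s power_var ('X_[(\sum_(i <- l) U_(i) *+ (d i * k i))%MM] : R).
Proof.
elim: l => [|i l IH]; first by rewrite big_nil mpolyX0; apply: gen_subring1.
rewrite big_cons -(@skew_mulX _ _ _ sigma_comm); apply: gen_subringM => //.
rewrite [X in gen_subring _ _ X](_ : _ = power_var i ^+ k i); last first.
  by rewrite skew_expX; congr 'X_[_]; apply/mnmP => j; rewrite !mulmnE mulnA.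
exact/gen_subringX/gen_var.
Qed.

Definition residue_bound := (\max_i d i).+1.
Definition residue (al : 'X_{1..n}) : {ffun 'I_n -> 'I_residue_bound} :=
  [ffun i => inord (al i %% d i)].
Definition residue_monomial (f : {ffun 'I_n -> 'I_residue_bound}) : R :=
  'X_[[multinom (f i : nat) | i < n]].
Definition quotient_exponent (al : 'X_{1..n}) : 'X_{1..n} :=
  (\sum_(i <- enum 'I_n) U_(i) *+ (d i * (al i %/ d i)))%MM.

Lemma quotient_residueE al :
  al = (quotient_exponent al + [multinom (residue al i : nat) | i < n])%MM.
Proof.
apply/mnmP => j; rewrite mnmDE mnmE ffunE inordK; last first.
  rewrite ltnS; apply: leq_trans (ltnW (ltn_pmod _ (d_gt0 j))) _.
  exact: leq_bigmax.
rewrite /quotient_exponent mnm_sumE big_enum /= (bigD1 j) //= big1; last first.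
  by move=> i /negPf ne; rewrite mulmnE mnm1E ne mul0n.
by rewrite mulmnE mnm1E eqxx mul1n addn0 mulnC -divn_eq.
Qed.

Lemma finite_over_power_vars : finite_over (gen_subring s power_var) (fun _ => True).
Proof.
exists {ffun 'I_n -> 'I_residue_bound}, residue_monomial => u _.
pose t f : R :=
  \sum_(al <- msupp u | residue al == f) C u@_al * 'X_[quotient_exponent al].
exists t => [f|].
  rewrite /t -big_filter; apply: gen_subring_sum => al.
  by apply: gen_subringM; [apply: gen_subringC | apply: gen_subring_power_monomial].
apply: (ideal_eq I_ideal); rewrite {1}(skew_polyE u) /t.
under [RHS]eq_bigr do rewrite mulr_suml.
rewrite (exchange_big_dep predT) //=; apply: eq_bigr => al _.
rewrite (big_pred1 (residue al)) => [|f]; last by rewrite eq_sym.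
by rewrite -mulrA /residue_monomial skew_mulX -quotient_residueE.
Qed.

Lemma quotient_normalizable (central : bool) : bijective tau ->
  (central -> forall x, tau x = x) -> normalizable_quot central s I.
Proof.
move=> tau_bij tau_id.
have [m [y [y_comm y_aut y_indep fin_y]]] :=
  noether_normalization comm_power_var automorphic_power_var.
have [T [r fin_r]] := finite_over_trans finite_over_power_vars fin_y.
exists m, y, (fun _ => tau); split.
- by split=> // i j x.
- by move=> /tau_id tau_x i.
- by split=> [i j|i b]; apply: (ideal_eq I_ideal); [apply: y_comm | apply: y_aut].
- exact: y_indep.
exists #|T|, (fun i => r (enum_val i)) => x; have [t gt It] := fin_r x Logic.I.
exists (fun i => t (enum_val i)); split=> //.
by rewrite -(big_enum_val (A := T) (fun j => t j * r j)).
Qed.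

End PowerVariables.

End Normalization.

Lemma common_iterate_rmorph (D : pzRingType) n (sigma : 'I_n -> {rmorphism D -> D})
    (d : 'I_n -> nat) :
    (forall i, bijective (sigma i)) ->
    (forall i j x, iter (d i) (sigma i) x = iter (d j) (sigma j) x) ->
  exists2 tau : {rmorphism D -> D}, bijective tau & forall i x, iter (d i) (sigma i) x = tau x.
Proof.
move=> sigma_bij d_eq; case: (pickP (@predT 'I_n)) => [i0 _|n0]; last first.
  by exists idfun => [|i]; [exists id | have := n0 i].
exists (iter_rmorph (sigma i0) (d i0)) => [|i x]; last by rewrite iter_rmorphE (d_eq i i0).
elim: (d i0) => [|k IH] /=; first by exists id.
exact: bij_comp.
Qed.

Lemma common_period (T : Type) n (f : 'I_n -> T -> T) :
    (forall i, exists k, (0 < k)%N /\ forall x, iter k (f i) x = x) ->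
  exists2 K, (0 < K)%N & forall i x, iter K (f i) x = x.
Proof.
move=> k_ex; have [k k_per] := fin_all_exists k_ex; exists (\prod_i k i)%N.
  by rewrite prodn_gt0 // => i; case: (k_per i).
move=> i x; rewrite (bigD1 i) //= mulnC iterM; apply: iter_fix.
by case: (k_per i).
Qed.

Unset Implicit Arguments.
Theorem corollary3p8 (D : unitRingType) (n : nat)
  (sigma : 'I_n -> {rmorphism D -> D}) :
  is_division_ring D ->
  (forall i, is_ring_aut (sigma i)) ->
  pairwise_commuting (fun i => (sigma i : D -> D)) ->
  infinite_pred (fixed_center (fun i => (sigma i : D -> D))) ->
  ((exists d : 'I_n -> nat, (forall i, (0 < d i)%N) /\
       (forall i j (x : D), iter (d i) (sigma i) x = iter (d j) (sigma j) x)) ->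
     tuple_aut_normalizable (fun i => (sigma i : D -> D)))
  /\
  ((forall i, exists k : nat, (0 < k)%N /\ forall x : D, iter k (sigma i) x = x) ->
     tuple_central_normalizable (fun i => (sigma i : D -> D))).
Proof.
move=> D_division sigma_bij sigma_comm F_infinite; split.
  move=> [d [d_gt0 d_eq]] I I_ideal.
  have [tau tau_bij d_tau] := common_iterate_rmorph sigma_bij d_eq.
  exact: (quotient_normalizable sigma_comm I_ideal D_division F_infinite d_gt0 d_tau).
move=> /common_period[K K_gt0 K_per] I I_ideal.
have id_bij : bijective (idfun : {rmorphism D -> D}) by exists id.
exact: (quotient_normalizable sigma_comm I_ideal D_division F_infinite
          (d := fun _ => K) (tau := idfun) (fun _ => K_gt0) K_per id_bij
          (fun _ _ => erefl)).
Qed.
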